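(* Let $G$ be a connected graph with domination number $\gamma(G)\ge 2$ and let $H$ be any graph. If $X$ is a $\mu_t(G\circ H)$-set, then for every vertex $u\in V(G)$, $$|(\{u\}\times V(H))\cap X|\ge n(H)-1.$$
   Context: All graphs are finite, simple and undirected; $n(G)$ denotes the order of $G$ and $\gamma(G)$ its domination number. The lexicographic product $G\circ H$ has vertex set $V(G)\times V(H)$, with $(x,y)$ adjacent to $(x',y')$ iff $xx'\in E(G)$, or $x=x'$ and $yy'\in E(H)$. Let $F$ be a connected graph and $X\subseteq V(F)$. Two vertices $x,y\in V(F)$ are $X$-visible if there exists a shortest $x,y$-path in $F$ none of whose internal vertices belongs to $X$. $X$ is a total mutual-visibility set of $F$ if every two vertices of $F$ are $X$-visible (the empty set is allowed). $\mu_t(F)$ is the maximum cardinality of a total mutual-visibility set of $F$, and a $\mu_t(F)$-set is a total mutual-visibility set of that cardinality. *)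

From mathcomp Require Import all_boot all_order.
Set Implicit Arguments. Unset Strict Implicit. Unset Printing Implicit Defensive.

Definition simple_graph (T : finType) (e : rel T) : Prop :=
  symmetric e /\ irreflexive e.

(* A walk from x is x :: p with consecutive vertices adjacent (path e x p);
   its length is size p and it ends at last x p. *)
Definition gconnected (T : finType) (e : rel T) : Prop :=
  forall x y : T, exists p : seq T, path e x p /\ last x p = y.

Definition shortest_path (T : finType) (e : rel T) (x y : T) (p : seq T) : Prop :=
  [/\ path e x p, last x p = y &
      forall q : seq T, path e x q -> last x q = y -> size p <= size q].

Definition internal (T : Type) (x : T) (p : seq T) : seq T := behead (belast x p).

Definition visible (T : finType) (e : rel T) (X : {set T}) (x y : T) : Prop :=
  exists p : seq T, shortest_path e x y p /\ all (fun v => v \notin X) (internal x p).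

Definition total_mutual_visibility (T : finType) (e : rel T) (X : {set T}) : Prop :=
  forall x y : T, visible e X x y.

(* A mu_t(F)-set: a total mutual-visibility set of maximum cardinality
   (mu_t(F) = #|X| for such X; the empty set is always a t.m.v. set). *)
Definition is_mu_t_set (T : finType) (e : rel T) (X : {set T}) : Prop :=
  total_mutual_visibility e X /\
  forall Y : {set T}, total_mutual_visibility e Y -> #|Y| <= #|X|.

Definition dominating (T : finType) (e : rel T) (D : {set T}) : bool :=
  [forall v, (v \in D) || [exists d in D, e d v]].

Definition domination_number (T : finType) (e : rel T) : nat :=
  \big[minn/#|T|]_(D : {set T} | dominating e D) #|D|.

Definition lex_prod (T1 T2 : finType) (e1 : rel T1) (e2 : rel T2) : rel (T1 * T2) :=
  fun a b => e1 a.1 b.1 || ((a.1 == b.1) && e2 a.2 b.2).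

From mathcomp Require Import all_boot all_order.
From mathcomp Require Import zify.
Set Implicit Arguments. Unset Strict Implicit. Unset Printing Implicit Defensive.

(* Let X be a maximum total mutual-visibility set of G o H and
   suppose some fibre {u} x V(H) misses two vertices c = (u,h1), (u,h2) of X.
   We show that c |: X is still a total mutual-visibility set, contradicting
   maximality.  Whenever c is an internal vertex of a shortest path, its two
   path-neighbours a, b are non-adjacent, and c can be replaced by another
   common neighbour of a and b lying outside X:
   - if a, b lie outside the fibre of u, they are G-adjacent to u, hence
     adjacent to (u,h2);
   - if a, b lie inside the fibre, we use a vertex z outside X with z.1 a
     G-neighbour of u; it exists because gamma(G) >= 2 gives a vertex t at
     distance two from u in G, and the internal vertex of a shortest
     (u,h)-(t,h) path avoiding X is such a z;
   - a mixed pair a, b would be adjacent, which is impossible. *)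

Section ShortestPaths.
Variables (T : finType) (e : rel T).
Implicit Types (X : {set T}) (x y : T) (p : seq T).

(* Every vertex of the walk x :: p, except possibly its endpoint y, lies
   outside X (the start vertex x is not part of p). *)
Definition avoids (X : {set T}) (y : T) (p : seq T) : Prop :=
  forall v, v \in p -> v != y -> v \notin X.

Lemma shortest_path_shorten x y p : shortest_path e x y p ->
  exists p', [/\ shortest_path e x y p', uniq (x :: p') & {subset p' <= p}].
Proof.
case=> Hp Hl Hmin; case: (shortenP Hp) Hl => p' Hp' Hu Hsub Hl'.
exists p'; split => //; split => // q Hq Hlq.
apply: leq_trans (Hmin q Hq Hlq).
by apply: uniq_leq_size => //; case/andP: Hu.
Qed.

Lemma avoids_internal X x y p : last x p = y ->
  all (fun v => v \notin X) (internal x p) -> avoids X y p.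
Proof.
case/lastP: p => [|q z]; first by move=> _ _ v.
rewrite last_rcons => <-; rewrite /internal belast_rcons /= => /allP Hq v.
by rewrite mem_rcons inE => /orP[/eqP->|/Hq //]; rewrite eqxx.
Qed.

(* Conversely for duplicate-free walks, where y occurs only at the end. *)
Lemma internal_avoids X x y p : uniq (x :: p) -> last x p = y ->
  avoids X y p -> all (fun v => v \notin X) (internal x p).
Proof.
case/lastP: p => [|q z] //.
rewrite last_rcons /internal belast_rcons /= rcons_uniq => /andP[_ /andP[Hz _]].
move=> <- Hav; apply/allP => v Hv; apply: Hav; first by rewrite mem_rcons inE Hv orbT.
by apply: contraNneq Hz => <-.
Qed.

Lemma visible_witness X x y : visible e X x y ->
  exists p, [/\ shortest_path e x y p, uniq (x :: p) & avoids X y p].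
Proof.
case=> p [[Hp Hl Hmin] Hall]; have Hav := avoids_internal Hl Hall.
case: (shortest_path_shorten (And3 Hp Hl Hmin)) => p' [Hsp Hu Hsub].
by exists p'; split => // v /Hsub; apply: Hav.
Qed.

Lemma visible_of_avoids X x y p :
  shortest_path e x y p -> avoids X y p -> visible e X x y.
Proof.
move=> /shortest_path_shorten [p' [Hsp Hu Hsub]] Hav; exists p'; split => //.
by apply: internal_avoids Hu _ _ => [|v /Hsub]; [case: Hsp | apply: Hav].
Qed.

Lemma shortest_path_no_chord x y l c b r :
  shortest_path e x y (l ++ c :: b :: r) -> ~~ e (last x l) b.
Proof.
case=> Hp Hl Hmin; apply/negP => Hab.
move: Hp; rewrite cat_path /= => /andP[Hpl /and3P[_ _ Hpr]].
have := Hmin (l ++ b :: r); rewrite cat_path Hpl /= Hab Hpr !last_cat /= -Hl last_cat.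
by rewrite !size_cat /= => /(_ isT erefl); lia.
Qed.

Lemma shortest_path_replace x y l c z b r :
  shortest_path e x y (l ++ c :: b :: r) -> e (last x l) z -> e z b ->
  shortest_path e x y (l ++ z :: b :: r).
Proof.
case=> Hp Hl Hmin Haz Hzb; split.
- by move: Hp; rewrite !cat_path /= Haz Hzb => /andP[-> /and3P[_ _ ->]].
- by rewrite -Hl !last_cat.
- by move=> q Hq Hlq; move: (Hmin q Hq Hlq); rewrite !size_cat.
Qed.

Lemma tmv_extend (X : {set T}) (c : T) :
  total_mutual_visibility e X ->
  (forall a b, e a c -> e c b -> ~~ e a b ->
     exists2 z, z \notin c |: X & e a z && e z b) ->
  total_mutual_visibility e (c |: X).
Proof.
move=> Hvis Hdetour x y.
have [p [Hsp Hu Hav]] := visible_witness (Hvis x y).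
have [/andP[Hcp Hcy]|Hcp] := boolP ((c \in p) && (c != y)); last first.
  apply: (visible_of_avoids Hsp) => v Hv Hvy; rewrite in_setU1 negb_or Hav // andbT.
  by apply: contraNneq Hcp => Hvc; rewrite -Hvc Hv.
case/splitPr: Hcp Hsp Hu Hav => l [|b r] Hsp Hu Hav.
  by case: Hsp => _ Hl _; move: Hcy; rewrite -Hl last_cat /= eqxx.
have [Hac Hcb] : e (last x l) c /\ e c b.
  by case: Hsp => Hp _ _; move: Hp; rewrite cat_path /= => /and4P[].
have [z HzX /andP[Haz Hzb]] := Hdetour _ _ Hac Hcb (shortest_path_no_chord Hsp).
have Hcold : c \notin l ++ b :: r.
  by move: Hu; rewrite cons_uniq -cat1s uniq_catCA => /and3P[].
apply: (visible_of_avoids (shortest_path_replace Hsp Haz Hzb)) => v.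
rewrite mem_cat in_cons => /orP[Hv|/orP[/eqP-> //|Hv]] Hvy.
all: rewrite in_setU1 negb_or Hav ?andbT //; last by rewrite mem_cat /= in_cons Hv ?orbT.
all: by apply: contraNneq Hcold => <-; rewrite mem_cat Hv ?orbT.
Qed.

End ShortestPaths.

Section Domination.
Variables (T : finType) (e : rel T).

Lemma bigmin_leq (I : eqType) (r : seq I) (P : pred I) (F : I -> nat) k j :
  j \in r -> P j -> \big[minn/k]_(i <- r | P i) F i <= F j.
Proof.
elim: r => //= a r IH; rewrite inE big_cons => /orP[/eqP<-|Hj] Pj.
  by rewrite Pj geq_minl.
case: (P a); last exact: IH.
exact: leq_trans (geq_minr _ _) (IH Hj Pj).
Qed.

Lemma domination_number_le (D : {set T}) :
  dominating e D -> domination_number e <= #|D|.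
Proof. by move=> HD; apply: bigmin_leq (mem_index_enum D) HD. Qed.

Lemma walk_exits (A : pred T) s q : A s -> path e s q -> ~~ A (last s q) ->
  exists s' t, [/\ A s', e s' t & ~~ A t].
Proof.
elim: q s => [|t q IH] s Hs /=; first by rewrite Hs.
move=> /andP[Hst Hp] Hl; have [At|nAt] := boolP (A t); first exact: IH At Hp Hl.
by exists s, t.
Qed.

Lemma distance_two_vertex u : gconnected e -> 2 <= domination_number e ->
  exists s t, [/\ e u s, e s t, t != u & ~~ e u t].
Proof.
move=> Hconn Hgamma.
have /forallPn [v] : ~~ dominating e [set u].
  by apply: contraTN Hgamma => /domination_number_le; rewrite cards1 -ltnNge.
rewrite in_set1 negb_or => /andP[Hvu /existsPn Hnv].
have Huv : ~~ e u v by have := Hnv u; rewrite in_set1 eqxx.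
have [q [Hq Hlq]] := Hconn u v.
have Hout : ~~ ((last u q == u) || e u (last u q)) by rewrite Hlq negb_or Hvu Huv.
have Hin : (u == u) || e u u by rewrite eqxx.
have [s [t [Hs Hst]]] := walk_exits (A := fun w => (w == u) || e u w) Hin Hq Hout.
rewrite negb_or => /andP[Htu Hut]; exists s, t; split => //.
by case/orP: Hs => // /eqP Hsu; rewrite -Hsu Hst in Hut.
Qed.

End Domination.

Section LexProduct.
Variables (T1 T2 : finType) (e1 : rel T1) (e2 : rel T2).
Hypothesis hG : simple_graph e1.
Local Notation E := (lex_prod e1 e2).

Lemma lex_prod_to_fiber a u h : a.1 != u -> E a (u, h) = e1 a.1 u.
Proof. by move=> Ha; rewrite /lex_prod /= (negbTE Ha) orbF. Qed.

Lemma lex_prod_from_fiber b u h : b.1 != u -> E (u, h) b = e1 u b.1.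
Proof. by move=> Hb; rewrite /lex_prod /= eq_sym (negbTE Hb) orbF. Qed.

(* In a total mutual-visibility set of G o H (gamma(G) >= 2, G connected),
   some vertex z with z.1 adjacent to u in G lies outside X: it is the middle
   vertex of a shortest path from (u,h) to (t,h), t at distance two from u. *)
Lemma fiber_neighbour_outside (X : {set T1 * T2}) u (h : T2) :
  gconnected e1 -> 2 <= domination_number e1 ->
  total_mutual_visibility E X -> exists2 z : T1 * T2, e1 u z.1 & z \notin X.
Proof.
move=> Hconn Hgamma Hvis.
have [s [t [Hus Hst Htu Hut]]] := distance_two_vertex u Hconn Hgamma.
have [p [[Hp Hl Hmin] _ Hav]] := visible_witness (Hvis (u, h) (t, h)).
have := Hmin [:: (s, h); (t, h)]; rewrite /= /lex_prod /= Hus Hst => /(_ isT erefl).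
case: p Hp Hl Hav {Hmin} => [|m [|m' [|]]] //=.
- by move=> _ [Eut]; rewrite Eut eqxx in Htu.
- by move=> + Em; rewrite Em lex_prod_from_fiber //= (negbTE Hut).
- move=> + Em'; rewrite Em' => /and3P[Hum Hmt _] Hav _.
  have Hmu : m.1 != u.
    apply: contraTneq Hmt; case: m {Hum Hav} => w k /= ->.
    by rewrite lex_prod_from_fiber // (negbTE Hut).
  exists m; first by move: Hum; rewrite lex_prod_from_fiber.
  apply: Hav; first by rewrite !inE eqxx.
  by apply: contraTneq Hum => ->; rewrite lex_prod_from_fiber // (negbTE Hut).
Qed.

Lemma fiber_detour (X : {set T1 * T2}) u (h1 h2 : T2) (z : T1 * T2) :
  h1 != h2 -> (u, h2) \notin X -> e1 u z.1 -> z \notin X ->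
  forall a b, E a (u, h1) -> E (u, h1) b -> ~~ E a b ->
  exists2 z', z' \notin (u, h1) |: X & E a z' && E z' b.
Proof.
case: hG => Hsym Hirr Hh Hh2X Hz HzX a b Ha Hb Hab.
have [/eqP Hau|Hau] := boolP (a.1 == u); have [/eqP Hbu|Hbu] := boolP (b.1 == u).
- exists z; last by rewrite /lex_prod Hau Hbu Hz Hsym Hz.
  rewrite in_setU1 negb_or HzX andbT; apply: contraTneq Hz => ->.
  by rewrite Hirr.
- by move: Hab Hb; rewrite lex_prod_from_fiber // /lex_prod Hau => /norP[/negbTE->].
- by move: Hab Ha; rewrite lex_prod_to_fiber // /lex_prod Hbu => /norP[/negbTE->].
- exists (u, h2).
    by rewrite in_setU1 negb_or Hh2X andbT; apply: contraNneq Hh => -[->].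
  by move: Ha Hb; rewrite !lex_prod_to_fiber // !lex_prod_from_fiber // => -> ->.
Qed.

End LexProduct.

Lemma card_fiber (T1 T2 : finType) (X : {set T1 * T2}) u :
  #|[set v : T1 * T2 | v.1 == u] :&: X| = #|[set h | (u, h) \in X]|.
Proof.
rewrite -[RHS](@card_imset _ _ (pair u)); last by move=> h h' [].
apply: eq_card => -[w h]; rewrite !inE /=.
apply/andP/imsetP => [[/eqP-> Hx]|[h' Hh' [-> ->]]]; first by exists h; rewrite ?inE.
by rewrite inE in Hh'; rewrite eqxx.
Qed.

Lemma two_outside (T : finType) (A : {set T}) : #|A| < #|T| - 1 ->
  exists h1 h2, [/\ h1 \notin A, h2 \notin A & h1 != h2].
Proof.
move=> HA; have : 1 < #|~: A| by have := cardsC A; lia.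
by case/card_gt1P => h1 [h2 [H1 H2 Hne]]; exists h1, h2; rewrite -!in_setC.
Qed.

Theorem lemma4p1 (T1 T2 : finType) (e1 : rel T1) (e2 : rel T2)
  (hG : simple_graph e1) (hH : simple_graph e2)
  (hconn : gconnected e1) (hgamma : 2 <= domination_number e1)
  (X : {set T1 * T2}) (hX : is_mu_t_set (lex_prod e1 e2) X) :
  forall u : T1, #|T2| - 1 <= #|[set v : T1 * T2 | v.1 == u] :&: X|.
Proof.
move=> u; case: hX => Hvis Hmax; rewrite card_fiber leqNgt; apply/negP => Hlt.
have [h1 [h2 []]] := two_outside Hlt; rewrite !inE => Hh1X Hh2X Hh.
have [z Hz HzX] := fiber_neighbour_outside u h1 hconn hgamma Hvis.
have Hext := tmv_extend Hvis (fiber_detour hG Hh Hh2X Hz HzX).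
by have := Hmax _ Hext; rewrite cardsU1 Hh1X ltnn.
Qed.
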